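(* Let $\Lambda_1$ be a subgroup of $\mathbf{R}^m$ and $\Lambda_2$ a subgroup of $\mathbf{R}^m$ such that $\Lambda_1\oplus\Lambda_2$ is a lattice of covolume $1$ of $\mathbf{R}^m$, and let $C\subset\mathbf{R}^m$ be compact. Let $C_1$ be the projection of $C$ on $\mathbf{R}^m/\Lambda_1$ and $C_2$ the projection of $C$ on $\mathbf{R}^m/(\Lambda_1\oplus\Lambda_2)$, and set \[D_1=\operatorname{Leb}\big\{x\in C_1\mid\operatorname{Card}\{\lambda_2\in\Lambda_2\mid x\in C_1+\lambda_2\}\ge2\big\}.\] Then $\operatorname{Leb}(C_2)\le\operatorname{Leb}(C_1)-D_1/2$.
   Context: $\operatorname{Leb}$ denotes the measure induced by Lebesgue measure on the quotients of $\mathbf{R}^m$; $\Lambda_2$ acts by translation on $\mathbf{R}^m/\Lambda_1$. *)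

From HB Require Import structures.
From mathcomp Require Import all_boot all_order all_algebra.
From mathcomp Require Import all_classical all_reals all_analysis.
Set Implicit Arguments. Unset Strict Implicit. Unset Printing Implicit Defensive.
Import Order.TTheory GRing.Theory Num.Theory numFieldNormedType.Exports.
Local Open Scope classical_set_scope.
Local Open Scope ring_scope.

Section LebesgueRm.
Variables (R : realType) (m : nat).
Local Notation V := 'rV[R]_m.

Definition hbox (a b : V) : set V :=
  [set x | forall i : 'I_m, a ord0 i <= x ord0 i < b ord0 i].

Definition hbox_vol (a b : V) : \bar R :=
  (\prod_(i < m) Num.max 0 (b ord0 i - a ord0 i))%:E.

(* Lebesgue outer measure on R^m: infimum of total volumes of countable
   covers by half-open boxes (K selects which boxes are used, so that
   finite/empty covers are allowed). *)
Definition leb (A : set V) : \bar R :=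
  ereal_inf [set s : \bar R | exists (a b : nat -> V) (K : pred nat),
     A `<=` \bigcup_(k in [set k | K k]) hbox (a k) (b k) /\
     s = (\sum_(k <oo | K k) hbox_vol (a k) (b k))%E].

Definition leb_measurable (F : set V) : Prop :=
  forall A : set V, leb A = (leb (A `&` F) + leb (A `\` F))%E.

Definition mink_sum (A B : set V) : set V := [set a + b | a in A & b in B].

Definition is_subgroup (L : set V) : Prop :=
  L 0 /\ forall x y, L x -> L y -> L (x - y).

Definition covol1_lattice (L : set V) : Prop :=
  exists B : 'M[R]_m, `|\det B| = 1 /\
    L = [set z *m B | z in [set z : V | forall i, z ord0 i \is a Num.int]].

Definition fund_domain (L F : set V) : Prop :=
  leb_measurable F /\ forall x : V, exists! l, L l /\ F (x + l).

(* Lebesgue measure on R^m / L of a subset of the quotient, represented by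
   its (L-invariant) preimage S in R^m, computed through a measurable
   fundamental domain F of L. *)
Definition quot_leb (F S : set V) : \bar R := leb (S `&` F).

End LebesgueRm.

From HB Require Import structures.
From mathcomp Require Import all_boot all_order all_algebra.
From mathcomp Require Import all_classical all_reals all_analysis.
From mathcomp Require Import measurable_realfun lra.
Set Implicit Arguments. Unset Strict Implicit. Unset Printing Implicit Defensive.
Import Order.TTheory GRing.Theory Num.Theory numFieldNormedType.Exports.
Local Open Scope classical_set_scope.
Local Open Scope ring_scope.

(* For x in the fundamental domain F2 of L1 + L2, let N(x) be the number of
   l in L2 with x in C1 + l, and N'(x) the same count for the set defining D1.
   Pointwise 1_C2 + N'/2 <= N: if x is covered at least twice then N' = N >= 2,
   otherwise N' = 0 while x in C2 forces N >= 1.  Integrating over F2: the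
   translates F2 + l (l in L2) tile a fundamental domain of L1, and any two
   measurable fundamental domains of L1 give the same measure to L1-invariant
   sets, so N integrates to Leb(C1) and N' to D1. *)

Section lebesgue_outer_measure.
Variables (R : realType) (m : nat).
Local Notation V := 'rV[R]_m.
Local Open Scope ereal_scope.

Lemma hbox_vol_ge0 (a b : V) : 0 <= hbox_vol a b.
Proof. by rewrite lee_fin; apply: prodr_ge0 => i _; rewrite le_max lexx. Qed.

Lemma leb_ge0 (A : set V) : 0 <= leb A.
Proof.
apply: le_ereal_inf_tmp => _ [a [b [K [_ ->]]]].
by apply: nneseries_ge0 => n _ _; exact: hbox_vol_ge0.
Qed.

Lemma leb0 : leb (set0 : set V) = 0.
Proof.
apply/eqP; rewrite eq_le leb_ge0 andbT.
apply: ereal_inf_lbound; exists (fun=> 0%R), (fun=> 0%R), xpred0; split => //.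
by rewrite eseries0.
Qed.

Lemma le_leb : {homo @leb R m : A B / A `<=` B >-> A <= B}.
Proof.
move=> A B AB; apply: le_ereal_inf_tmp => _ [a [b [K [cov ->]]]].
by apply: ereal_inf_lbound; exists a, b, K; split => //; exact: subset_trans cov.
Qed.

Lemma leb_le_cover (A : set V) (a b : nat -> V) (K : pred nat) :
  A `<=` \bigcup_(k in [set k | K k]) hbox (a k) (b k) ->
  leb A <= \sum_(k <oo | K k) hbox_vol (a k) (b k).
Proof. by move=> cov; apply: ereal_inf_lbound; exists a, b, K. Qed.

Lemma leb_cover_approx (A : set V) (e : R) : (0 < e)%R -> leb A < +oo ->
  exists (a b : nat -> V) (K : pred nat),
    A `<=` \bigcup_(k in [set k | K k]) hbox (a k) (b k) /\
    \sum_(k <oo | K k) hbox_vol (a k) (b k) <= leb A + e%:E.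
Proof.
move=> e0 Afin; have /(lb_ereal_inf_adherent e0)[_ [a [b [K [cov ->]]]] lt_sum] :
  leb A \is a fin_num by rewrite ge0_fin_numE ?leb_ge0.
by exists a, b, K; split => //; exact: ltW.
Qed.

Lemma leb_le_double_cover (A : set V) (a b : nat -> nat -> V) (K : nat -> pred nat) :
  A `<=` \bigcup_i \bigcup_(j in [set j | K i j]) hbox (a i j) (b i j) ->
  leb A <= \sum_(i <oo) \sum_(j <oo | K i j) hbox_vol (a i j) (b i j).
Proof.
move=> cov; pose v (p : nat * nat) := hbox_vol (a p.1 p.2) (b p.1 p.2).
pose S := [set p : nat * nat | K p.1 p.2].
have v0 p : 0 <= v p by exact: hbox_vol_ge0.
have -> : \sum_(i <oo) \sum_(j <oo | K i j) hbox_vol (a i j) (b i j) = \esum_(p in S) v p.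
  rewrite nneseries_esumT; last by move=> i; apply: nneseries_ge0 => j _ _; exact: v0 (i, j).
  transitivity (\esum_(i in [set: nat]) \esum_(j in [set j | K i j]) v (i, j)).
    by apply: eq_esum => i _; rewrite nneseries_esum // => j _; exact: v0 (i, j).
  rewrite esum_esum; last by move=> i j _ _; exact: v0.
  rewrite (_ : _ `*`` _ = S); last by apply/seteqP; split => -[i j] //= [].
  by apply: eq_esum => -[i j].
have /card_esym/ppcard_eqP[f] := card_nat2.
pose P k := K (f k).1 (f k).2.
have -> : S = f @` [set k | P k].
  apply/seteqP; split => [p Sp|_ [k Pk <-]] //.
  by exists (f^-1%FUN p); rewrite /= /P invK ?inE.
rewrite esum_pred_image; last 2 first.
- by move=> k _; exact: v0.
- by move=> k l _ _; apply: inj; rewrite in_setT.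
apply: leb_le_cover => x /cov [i _ [j Kij xij]].
by exists (f^-1%FUN (i, j)); rewrite /= /P invK ?inE.
Qed.

Lemma leb_sigma_subadditive : sigma_subadditive (@leb R m).
Proof.
move=> A; have [[i Aioo]|] := pselect (exists i, leb (A i) = +oo).
  rewrite (eseries_pinfty _ _ Aioo) ?leey// => n _.
  by rewrite -ltNye (lt_le_trans _ (leb_ge0 _)).
rewrite -forallNE => Afin; apply/lee_addgt0Pr => e e0.
rewrite (le_trans _ (epsilon_trick _ _ _)) ?(ltW e0) //; last by move=> n; exact: leb_ge0.
have /choice[c cP] : forall n, exists c : (nat -> V) * (nat -> V) * pred nat,
    A n `<=` \bigcup_(k in [set k | c.2 k]) hbox (c.1.1 k) (c.1.2 k) /\
    \sum_(k <oo | c.2 k) hbox_vol (c.1.1 k) (c.1.2 k)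
      <= leb (A n) + (e / (2 ^ n.+1)%:R)%:E.
  move=> n; have en : (0 < e / (2 ^ n.+1)%:R)%R by rewrite divr_gt0.
  have /(leb_cover_approx en)[a [b [K abK]]] : leb (A n) < +oo by rewrite ltey; exact/eqP.
  by exists (a, b, K).
apply: le_trans (leb_le_double_cover (a := fun n => (c n).1.1)
  (b := fun n => (c n).1.2) (K := fun n => (c n).2) _) _.
  by move=> x [n _ /(cP n).1 [k Kk hk]]; exists n => //; exists k.
apply: lee_nneseries => n _; last exact: (cP n).2.
by rewrite nneseries_ge0 // => k _ _; exact: hbox_vol_ge0.
Qed.

HB.instance Definition _ := isOuterMeasure.Build R V (@leb R m)
  leb0 leb_ge0 le_leb leb_sigma_subadditive.

End lebesgue_outer_measure.

Notation shift A l := (mink_sum A [set l]).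

Section translation.
Variables (R : realType) (m : nat).
Local Notation V := 'rV[R]_m.
Implicit Types (A B : set V) (a b l : V).

Lemma shiftE A l : shift A l = [set x | A (x - l)].
Proof.
apply/seteqP; split => [_ [a Aa [_ -> <-]]|x Ax]; first by rewrite /= addrK.
by exists (x - l) => //; exists l => //; rewrite subrK.
Qed.

Lemma shiftK A l : shift (shift A l) (- l) = A.
Proof. by rewrite !shiftE; apply/seteqP; split => x /=; rewrite opprK addrK. Qed.

Lemma shiftNK A l : shift (shift A (- l)) l = A.
Proof. by rewrite -{2}(opprK l) shiftK. Qed.

Lemma shift_shift A a b : shift (shift A a) b = shift A (a + b).
Proof. by rewrite !shiftE; apply/funext => x /=; rewrite opprD addrA [x - a - b]addrAC. Qed.

Lemma shiftI A B l : shift (A `&` B) l = shift A l `&` shift B l.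
Proof. by rewrite !shiftE. Qed.

Lemma shiftD A B l : shift (A `\` B) l = shift A l `\` shift B l.
Proof. by rewrite !shiftE. Qed.

Lemma hbox_shift a b l : shift (hbox a b) l = hbox (a + l) (b + l).
Proof.
rewrite shiftE; apply/seteqP; split => x /= H i; have := H i;
  by rewrite !mxE lerBrDr ltrBlDr.
Qed.

Lemma hbox_vol_shift a b l : hbox_vol (a + l) (b + l) = hbox_vol a b.
Proof.
congr (_%:E); apply: eq_bigr => i _; rewrite !mxE.
by rewrite opprD addrACA subrr addr0.
Qed.

Local Open Scope ereal_scope.

Lemma leb_shift_le A l : leb (shift A l) <= leb A.
Proof.
apply: le_ereal_inf_tmp => _ [a [b [K [cov ->]]]].
rewrite -(eq_eseriesr (fun k _ => hbox_vol_shift (a k) (b k) l)).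
apply: leb_le_cover => _ [x Ax [_ -> <-]].
by have [k Kk xk] := cov x Ax; exists k; rewrite // -hbox_shift; exists x => //; exists l.
Qed.

Lemma leb_shift A l : leb (shift A l) = leb A.
Proof.
apply/eqP; rewrite eq_le leb_shift_le /=.
by rewrite -{1}(shiftK A l) leb_shift_le.
Qed.

End translation.

Lemma itv_length_split (R : realFieldType) (a b c : R) :
  Num.max 0 (Num.min b c - a) + Num.max 0 (b - Num.max a c) = Num.max 0 (b - a).
Proof.
rewrite (maxEle a c) (minEle b c).
case: (lerP a c) => h1; case: (lerP b c) => h2; rewrite !maxEle;
  case: (lerP 0 (b - a)) => h3;
  try (case: (lerP 0 (b - c)) => h4); try (case: (lerP 0 (b - a)) => h4);
  try (case: (lerP 0 (c - a)) => h5);  try (case: (lerP 0 (b - a)) => h5); lra.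
Qed.

Section lebesgue_measure.
Variables (R : realType) (m : nat).
Local Notation V := 'rV[R]_m.

Definition leb_outer : {outer_measure set V -> \bar R} := @leb R m.
Definition Rm := caratheodory_type leb_outer.
Definition lebesgue : measure Rm R := (leb_outer : set Rm -> \bar R).

Local Open Scope ereal_scope.

Lemma measurable_lebP (A : set V) : measurable (A : set Rm) <-> leb_measurable A.
Proof.
change (leb_outer.-caratheodory A <-> leb_measurable A).
by split => mA X; [rewrite setDE; exact: mA | rewrite -setDE; exact: mA].
Qed.

Lemma lebesgue_shift (A : set V) l : lebesgue (shift A l) = lebesgue A.
Proof. exact: leb_shift. Qed.

Lemma measurable_shift (A : set V) l :
  measurable (A : set Rm) -> measurable (shift A l : set Rm).
Proof.
rewrite !measurable_lebP => mA X.
rewrite -(leb_shift X (- l)%R) (mA (shift X (- l)%R)).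
rewrite -[leb (X `&` _)](leb_shift _ (- l)%R) -[leb (X `\` _)](leb_shift _ (- l)%R).
by rewrite shiftI shiftD shiftK.
Qed.

Lemma hbox_vol_split (a b : V) (i : 'I_m) (c : R) :
  hbox_vol a b =
    hbox_vol a (\row_j (if j == i then Num.min (b ord0 j) c else b ord0 j)) +
    hbox_vol (\row_j (if j == i then Num.max (a ord0 j) c else a ord0 j)) b.
Proof.
rewrite /hbox_vol -EFinD; congr (_%:E).
rewrite [LHS](bigD1 i) //= [X in _ = (X + _)%R](bigD1 i) //=.
rewrite [X in _ = (_ + X)%R](bigD1 i) //= !mxE !eqxx -(itv_length_split _ _ c) mulrDl.
by congr (_ * _ + _ * _)%R; apply: eq_bigr => j /negbTE ji; rewrite !mxE ji.
Qed.

Lemma measurable_halfspace (i : 'I_m) (c : R) :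
  measurable ([set x : V | x ord0 i < c]%R : set Rm).
Proof.
apply: (@le_caratheodory_measurable _ _ leb_outer) => X.
apply: le_ereal_inf_tmp => _ [a [b [K [cov ->]]]].
pose b' k : V := \row_j (if j == i then Num.min (b k ord0 j) c else b k ord0 j).
pose a' k : V := \row_j (if j == i then Num.max (a k ord0 j) c else a k ord0 j).
rewrite (eq_eseriesr (fun k _ => hbox_vol_split (a k) (b k) i c)) nneseriesD; last 2 first.
- by move=> k _ _; rewrite hbox_vol_ge0.
- by move=> k _ _; rewrite hbox_vol_ge0.
apply: leeD; apply: leb_le_cover.
- move=> x [/cov [k Kk hk] xc]; exists k => // j; have := hk j; rewrite !mxE.
  by case: eqP => // ->; rewrite lt_min xc => /andP[-> ->].
- move=> x [/cov [k Kk hk] /negP]; rewrite -leNgt => cx.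
  exists k => // j; have := hk j; rewrite !mxE.
  by case: eqP => // ->; rewrite ge_max cx andbT.
Qed.

Lemma measurable_hbox (a b : V) : measurable (hbox a b : set Rm).
Proof.
have -> : hbox a b = \big[setI/setT]_(i <- enum 'I_m)
    ([set x : V | x ord0 i < b ord0 i] `\` [set x : V | x ord0 i < a ord0 i])%R.
  rewrite -bigcap_seq; apply/seteqP; split => [x xab i _|x xab i].
    by have /andP[ax xb] := xab i; split => //=; apply/negP; rewrite -leNgt.
  by have [/= xb /negP] := xab i (mem_enum _ i); rewrite -leNgt => ax; apply/andP.
by apply: bigsetI_measurable => i _; apply: measurableD; exact: measurable_halfspace.
Qed.

Lemma rational_hbox_in_ball (x : V) (e : R) : (0 < e)%R ->
  exists p q : 'rV[rat]_m,
    hbox (map_mx ratr p) (map_mx ratr q) x /\ hbox (map_mx ratr p) (map_mx ratr q) `<=` ball x e.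
Proof.
move=> e0; have ratr_between (u v : R) : (u < v)%R -> exists r : rat, (u < ratr r < v)%R.
  by move=> /rat_in_itvoo[r]; rewrite in_itv /=; exists r.
have /choice[p Hp] i : exists r : rat, (x ord0 i - e < ratr r < x ord0 i)%R.
  by apply: ratr_between; rewrite ltrBlDr ltrDl.
have /choice[q Hq] i : exists r : rat, (x ord0 i < ratr r < x ord0 i + e)%R.
  by apply: ratr_between; rewrite ltrDl.
exists (\row_i p i), (\row_i q i); split => [i|y yb].
  by rewrite !mxE; have /andP[_ /ltW ->] := Hp i; have /andP[-> _] := Hq i.
split => // i j; rewrite (ord1 i); have := yb j; rewrite !mxE.
have := Hp j; have := Hq j => /andP[? ?] /andP[? ?] /andP[? ?].
by rewrite /ball /= ltr_norml; apply/andP; split; lra.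
Qed.

Lemma measurable_open (U : set V) : open U -> measurable (U : set Rm).
Proof.
move=> oU; pose box (pq : 'rV[rat]_m * 'rV[rat]_m) : set V :=
  hbox (map_mx ratr pq.1) (map_mx ratr pq.2).
have -> : U = \bigcup_pq (if `[< box pq `<=` U >] then box pq else set0).
  apply/seteqP; split => [x Ux|x [pq _]]; last by case: asboolP => // pqU /pqU.
  have /nbhs_ballP[e e0 exU] : nbhs x U by exact: open_nbhs_nbhs.
  have [p [q [xpq pqe]]] := rational_hbox_in_ball x e0.
  by exists (p, q) => //; rewrite asboolT //; exact: subset_trans pqe exU.
apply: countable_bigcupT_measurable => // pq.
by case: asboolP => _; [exact: measurable_hbox | exact: measurable0].
Qed.

Lemma measurable_closed (C : set V) : closed C -> measurable (C : set Rm).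
Proof. by move=> cC; rewrite -(setCK C); apply/measurableC/measurable_open/closed_openC. Qed.

Lemma leb_hbox_le (a b : V) : leb (hbox a b) <= hbox_vol a b.
Proof.
apply: le_trans (leb_le_cover (a := fun=> a) (b := fun=> b) (K := pred1 0%N) _) _.
  by move=> x abx; exists 0%N.
rewrite (@nneseriesD1 _ _ 0%N) //; last by move=> k _; exact: hbox_vol_ge0.
by rewrite eseries0 ?adde0 // => k _ /andP[/eqP ->]; rewrite eqxx.
Qed.

Lemma coord_le_norm (x : V) (i : 'I_m) : (`|x ord0 i| <= `|x|)%R.
Proof.
change (`|x ord0 i| <= mx_norm x)%R; rewrite mx_normrE.
exact: le_trans _ (le_bigmax _ _ (ord0, i)).
Qed.

Lemma compact_lebesgue_fin (C : set V) : compact C -> lebesgue C < +oo.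
Proof.
move=> /compact_bounded[M [_ HM]]; pose r := (M + 2)%R.
have Cbox : C `<=` hbox (const_mx (- r)%R) (const_mx r).
  move=> x Cx i; have := HM (M + 1)%R; rewrite ltrDl ltr01 => /(_ isT x Cx).
  move=> /(le_trans (coord_le_norm x i)); rewrite !mxE ler_norml => /andP[].
  rewrite /r; lra.
exact: le_lt_trans (le_leb Cbox) (le_lt_trans (leb_hbox_le _ _) (ltry _)).
Qed.

End lebesgue_measure.

Section countable_sums.
Context d (T : measurableType d) (R : realType) (I : pointedType) (L : set I).
Hypothesis countL : countable L.
Local Open Scope ereal_scope.

Lemma countable_enum : exists (P : set nat) (e : nat -> I), set_bij P L e.
Proof.
by have /countable_bijP[P /card_esym/card_set_bijP[e eP]] := countL; exists P, e.
Qed.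

Lemma set_bij_image (P : set nat) (e : nat -> I) : set_bij P L e -> L = e @` P.
Proof.
move=> eP; apply/seteqP; split; last exact: set_bij_sub eP.
exact: set_bij_surj eP.
Qed.

Lemma esum_enum (P : set nat) (e : nat -> I) (a : I -> \bar R) : set_bij P L e ->
  (forall i, L i -> 0 <= a i) -> \esum_(i in L) a i = \sum_(n <oo | n \in P) a (e n).
Proof.
move=> eP a0; rewrite (reindex_esum P L e) // nneseries_esum ?set_mem_set //.
by move=> n /set_mem Pn; apply: a0; exact: set_bij_homo eP n Pn.
Qed.

Lemma countable_bigcup_measurable (E : I -> set T) :
  (forall i, L i -> measurable (E i)) -> measurable (\bigcup_(i in L) E i).
Proof.
move=> mE; have [P [e eP]] := countable_enum; rewrite (set_bij_image eP) bigcup_image.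
by apply: bigcup_measurable => n Pn; apply: mE; exact: set_bij_homo eP n Pn.
Qed.

Variable mu : {measure set T -> \bar R}.

Lemma measure_countable_bigcup (E : I -> set T) :
  (forall i, L i -> measurable (E i)) -> trivIset L E ->
  mu (\bigcup_(i in L) E i) = \esum_(i in L) mu (E i).
Proof.
move=> mE tE; have [P [e eP]] := countable_enum.
rewrite (esum_enum eP) // (set_bij_image eP) bigcup_image measure_bigcup //.
  by move=> n Pn; apply: mE; exact: set_bij_homo eP n Pn.
by rewrite (trivIset_comp _ (set_bij_inj eP)) -(set_bij_image eP).
Qed.

Lemma measure_countable_bigcup_le (E : I -> set T) :
  (forall i, L i -> measurable (E i)) -> mu (\bigcup_(i in L) E i) <= \esum_(i in L) mu (E i).
Proof.
move=> mE; have [P [e eP]] := countable_enum.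
have mEe n : P n -> measurable (E (e n)) by move=> Pn; apply: mE; exact: set_bij_homo eP n Pn.
rewrite (esum_enum eP) // (set_bij_image eP) bigcup_image eseries_mkcond.
pose A n := if n \in P then E (e n) else set0.
have mA n : measurable (A n) by rewrite /A; case: ifPn => [/set_mem/mEe|_].
apply: le_trans (measure_sigma_subadditive mu (F := A) mA _ _) _.
- exact: bigcup_measurable.
- by move=> x [n Pn Ex]; exists n => //; rewrite /A mem_set.
- by apply: lee_nneseries => n _; rewrite /A; case: ifPn; rewrite ?measure0.
Qed.

Variable D : set T.
Hypothesis mD : measurable D.

Lemma emeasurable_esum (f : I -> T -> \bar R) :
  (forall i, L i -> measurable_fun D (f i)) -> (forall i x, L i -> D x -> 0 <= f i x) ->
  measurable_fun D (fun x => \esum_(i in L) f i x).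
Proof.
move=> mf f0; have [P [e eP]] := countable_enum.
have eL n : n \in P -> L (e n) by move=> /set_mem Pn; exact: set_bij_homo eP n Pn.
apply: (eq_measurable_fun (fun x => \sum_(n <oo | n \in P) f (e n) x)).
  by move=> x /set_mem Dx; rewrite (esum_enum eP) // => i Li; exact: f0.
apply: ge0_emeasurable_sum => [n x Dx /eL Lx|n /eL Ln]; [exact: f0 | exact: mf].
Qed.

Lemma integral_esum (f : I -> T -> \bar R) :
  (forall i, L i -> measurable_fun D (f i)) -> (forall i x, L i -> D x -> 0 <= f i x) ->
  \int[mu]_(x in D) (\esum_(i in L) f i x) = \esum_(i in L) \int[mu]_(x in D) f i x.
Proof.
move=> mf f0; have [P [e eP]] := countable_enum.
have eL n : n \in P -> L (e n) by move=> /set_mem Pn; exact: set_bij_homo eP n Pn.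
pose g n := if n \in P then f (e n) else cst 0.
transitivity (\int[mu]_(x in D) (\sum_(n <oo) g n x)).
  apply: eq_integral => x /set_mem Dx.
  rewrite (esum_enum eP) ?eseries_mkcond => [|i Li]; last exact: f0.
  by apply: eq_eseriesr => n _; rewrite /g; case: ifPn.
rewrite integral_nneseries //; last 2 first.
- move=> n; rewrite /g; case: ifPn => [nP|_]; last exact: measurable_cst.
  exact/mf/eL.
- by move=> n x Dx; rewrite /g; case: ifPn => // nP; exact/f0/Dx/eL.
rewrite (esum_enum eP); last by move=> i Li; apply: integral_ge0 => x; exact: f0.
rewrite [RHS]eseries_mkcond; apply: eq_eseriesr => n _.
by rewrite /g; case: ifPn => // _; exact: integral0.
Qed.

End countable_sums.

Section esum_lower_bounds.
Context (R : realType) (I : choiceType) (L : set I) (a : I -> \bar R).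
Local Open Scope ereal_scope.

Lemma esum_ge1 i : L i -> a i <= \esum_(k in L) a k.
Proof.
move=> Li; apply: esum_ge; exists [set i]; last by rewrite fsbig_set1.
by split; [exact: finite_set1 | move=> _ ->].
Qed.

Lemma esum_ge2 i j : L i -> L j -> i != j -> a i + a j <= \esum_(k in L) a k.
Proof.
move=> Li Lj ij; apply: esum_ge; exists [set i; j].
  by split; [exact: finite_set2 | move=> _ [->|->]].
rewrite fsbigU0 ?fsbig_set1 // => _ [-> /eqP].
by rewrite (negPf ij).
Qed.

End esum_lower_bounds.

Section tilings.
Variables (R : realType) (m : nat).
Local Notation V := 'rV[R]_m.
Implicit Types (A F G S L : set V).

Lemma subgroupN L l : is_subgroup L -> L l -> L (- l).
Proof. by move=> [L0 LB] Ll; rewrite -sub0r; exact: LB. Qed.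

Lemma subgroupD L a b : is_subgroup L -> L a -> L b -> L (a + b).
Proof. by move=> gL La Lb; rewrite -(opprK b); apply: gL.2 => //; exact: subgroupN. Qed.

Lemma mink_sumP A L x : mink_sum A L x <-> exists2 l, L l & A (x - l).
Proof.
split => [[a Aa [l Ll <-]]|[l Ll Axl]]; first by exists l; rewrite // addrK.
by exists (x - l) => //; exists l; rewrite // subrK.
Qed.

Lemma mink_sum_bigcup A L : mink_sum A L = \bigcup_(l in L) shift A l.
Proof.
apply/seteqP; split => [x /mink_sumP[l Ll Axl]|x [l Ll]]; first by exists l; rewrite // shiftE.
by rewrite shiftE => Axl; apply/mink_sumP; exists l.
Qed.

Lemma mink_sum_subgroup L L' : is_subgroup L -> is_subgroup L' -> is_subgroup (mink_sum L L').
Proof.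
move=> gL gL'; split; first by exists 0; [exact: gL.1 | exists 0; [exact: gL'.1 | rewrite addr0]].
move=> _ _ [a La [b Lb <-]] [a' La' [b' Lb' <-]]; rewrite opprD addrACA.
by exists (a - a'); [exact: gL.2 | exists (b - b') => //; exact: gL'.2].
Qed.

Lemma sub_mink_suml L L' : is_subgroup L' -> L `<=` mink_sum L L'.
Proof. by move=> gL' l Ll; exists l => //; exists 0; [exact: gL'.1 | rewrite addr0]. Qed.

Lemma sub_mink_sumr L L' : is_subgroup L -> L' `<=` mink_sum L L'.
Proof. by move=> gL l Ll; exists 0; [exact: gL.1 | exists l => //; rewrite add0r]. Qed.

Lemma mink_sumA A L L' : mink_sum A (mink_sum L L') = mink_sum (mink_sum A L) L'.
Proof.
apply/seteqP; split => x.
  move=> [a Aa [_ [l Ll [l' Ll' <-]]] <-]; rewrite addrA.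
  by exists (a + l) => //; [exists a => //; exists l | exists l'].
move=> [_ [a Aa [l Ll <-]] [l' Ll' <-]]; rewrite -addrA.
by exists a => //; exists (l + l') => //; exists l => //; exists l'.
Qed.

Lemma shift_mink_sum_subgroup A L l : is_subgroup L -> L l ->
  shift (mink_sum A L) l = mink_sum A L.
Proof.
move=> gL Ll; rewrite shiftE; apply/seteqP; split => x /= /mink_sumP[k Lk Ax]; apply/mink_sumP.
  by exists (l + k); [exact: subgroupD | rewrite opprD addrA].
by exists (k - l); [exact: gL.2 | rewrite opprB addrA subrK].
Qed.

Lemma covol1_lattice_countable L : covol1_lattice L -> countable L.
Proof.
move=> [B [_ ->]]; pose f (z : 'rV[int]_m) : V := map_mx intr z *m B.
have fint : countable (f @` setT) by exact: sub_countable (card_image_le _ _) (countableP _).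
apply: sub_countable fint; apply: subset_card_le => _ [z zZ <-].
exists (map_mx (fun r => Num.floor r) z) => //; congr (_ *m B).
by apply/matrixP => i j; rewrite !mxE (ord1 i) floorK // zZ.
Qed.

Definition tiling L F := forall x, exists! l, L l /\ shift F l x.

Lemma fund_domain_tiling L F : is_subgroup L -> fund_domain L F -> tiling L F.
Proof.
move=> gL [_ uF] x; have [l [[Ll Fxl] ul]] := uF x.
exists (- l); split; first by split; [exact: subgroupN | rewrite shiftE /= opprK].
move=> l' [Ll']; rewrite shiftE /= => Fxl'.
by rewrite -[l']opprK (ul (- l')) //; split; [exact: subgroupN | ].
Qed.

Lemma tiling_trivIset L L' F : tiling L F -> L' `<=` L -> trivIset L' (fun l => shift F l).
Proof.
move=> tF L'L i j L'i L'j [x [Fix Fjx]]; have [l [_ ul]] := tF x.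
by rewrite -(ul i) ?(ul j) //; split => //; exact: L'L.
Qed.

Lemma tiling_cover L F : tiling L F -> \bigcup_(l in L) shift F l = setT.
Proof. by move=> tF; apply/seteqP; split => // x _; have [l [[Ll Fx] _]] := tF x; exists l. Qed.

Lemma tiling_mink_sum L1 L2 F : is_subgroup L1 -> is_subgroup L2 ->
  L1 `&` L2 = [set 0] -> tiling (mink_sum L1 L2) F -> tiling L1 (mink_sum F L2).
Proof.
move=> g1 g2 L12 tF x; have [_ [[[a La [b Lb <-]] Fx] u]] := tF x.
move: Fx; rewrite shiftE /= opprD addrA => Fx.
exists a; split; first by split; rewrite // shiftE /=; apply/mink_sumP; exists b.
move=> a' [La']; rewrite shiftE => /mink_sumP[b' Lb' Fx'].
have ab : a + b = a' + b'.
  by apply: u; split; [exists a' => //; exists b' | rewrite shiftE /= opprD addrA].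
have : (L1 `&` L2) (a - a').
  split; first exact: g1.2.
  by rewrite -(addrK b a) ab [a' + b']addrC addrAC addrK; exact: g2.2.
by rewrite L12 => /eqP; rewrite subr_eq0 => /eqP.
Qed.

End tilings.

Section lebesgue_tilings.
Variables (R : realType) (m : nat).
Local Notation V := 'rV[R]_m.
Local Notation lebesgue := (@lebesgue R m).
Implicit Types (A F G S L : set V).
Local Open Scope ereal_scope.

Lemma measurable_mink_sum A L : countable L ->
  measurable (A : set (Rm R m)) -> measurable (mink_sum A L : set (Rm R m)).
Proof.
move=> cL mA; rewrite mink_sum_bigcup.
by apply: countable_bigcup_measurable => // l _; exact: measurable_shift.
Qed.

Lemma lebesgue_tiling_esum L F A : countable L -> tiling L F ->
  measurable (F : set (Rm R m)) -> measurable (A : set (Rm R m)) ->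
  lebesgue A = \esum_(l in L) lebesgue (A `&` shift F l).
Proof.
move=> cL tF mF mA; rewrite -measure_countable_bigcup //.
- by rewrite -setI_bigcupr tiling_cover ?setIT.
- by move=> l _; apply: measurableI => //; exact: measurable_shift.
- by apply: trivIset_setIl; exact: tiling_trivIset tF _.
Qed.

Lemma esum_lebesgue_shift_swap L A F : is_subgroup L ->
  \esum_(l in L) lebesgue (shift A l `&` F) = \esum_(l in L) lebesgue (A `&` shift F l).
Proof.
move=> gL; rewrite (reindex_esum L L -%R).
  by apply: eq_esum => l _; rewrite -(lebesgue_shift _ l) shiftI shiftNK.
split=> [l /subgroupN|l k _ _ /oppr_inj //|l Ll]; first exact.
by exists (- l)%R; [exact: subgroupN | rewrite opprK].
Qed.

Lemma lebesgue_tiling_invariant L G F S : countable L -> is_subgroup L ->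
  tiling L G -> tiling L F ->
  measurable (G : set (Rm R m)) -> measurable (F : set (Rm R m)) ->
  measurable (S : set (Rm R m)) -> (forall l, L l -> shift S l = S) ->
  lebesgue (S `&` G) = lebesgue (S `&` F).
Proof.
move=> cL gL tG tF mG mF mS invS.
rewrite (lebesgue_tiling_esum cL tF mF); last exact: measurableI.
rewrite [RHS](lebesgue_tiling_esum cL tG mG); last exact: measurableI.
rewrite -esum_lebesgue_shift_swap //; apply: eq_esum => l Ll.
by rewrite shiftI invS // setIAC.
Qed.

Lemma lebesgue_mink_sum_tiling_le L A F : countable L -> is_subgroup L -> tiling L F ->
  measurable (A : set (Rm R m)) -> measurable (F : set (Rm R m)) ->
  lebesgue (mink_sum A L `&` F) <= lebesgue A.
Proof.
move=> cL gL tF mA mF; rewrite mink_sum_bigcup setI_bigcupl.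
apply: le_trans (measure_countable_bigcup_le _ _ _) _ => //.
  by move=> l _; apply: measurableI => //; exact: measurable_shift.
by rewrite esum_lebesgue_shift_swap // -lebesgue_tiling_esum.
Qed.

End lebesgue_tilings.

Lemma lee_add_half_count (R : realType) (i : R) (N : \bar R) :
  (i <= 1)%R -> (1 + 1 <= N)%E -> (i%:E + N * (2^-1)%:E <= N)%E.
Proof.
move=> i1; case: N => [r||] //=; last by move=> _; rewrite leey.
by rewrite -EFinM -!EFinD !lee_fin => r2; lra.
Qed.

Section cover_counts.
Variables (R : realType) (m : nat).
Local Notation V := 'rV[R]_m.
Local Notation lebesgue := (@lebesgue R m).
Implicit Types (A F L : set V).
Local Open Scope ereal_scope.

Definition covered_twice A L : set V :=
  [set x | exists l l' : V, [/\ L l, L l', l != l', shift A l x & shift A l' x]].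

Definition cover_count L A x : \bar R := \esum_(l in L) (\1_(shift A l) x)%:E.

Lemma shift_covered_twice A L l : shift (covered_twice A L) l = covered_twice (shift A l) L.
Proof.
rewrite shiftE; apply/seteqP; split => x [a [b [La Lb ab]]]; rewrite /= !shiftE /= => Aa Ab;
  by exists a, b; split; rewrite // !shiftE /= addrAC.
Qed.

Lemma covered_twice_shift A L l : is_subgroup L -> L l ->
  covered_twice (shift A l) L = covered_twice A L.
Proof.
move=> gL Ll; apply/seteqP; split => x [a [b [La Lb ab]]]; rewrite ?shift_shift => Aa Ab.
  by exists (l + a)%R, (l + b)%R; split; rewrite ?(inj_eq (addrI l)) //; exact: subgroupD.
exists (- l + a)%R, (- l + b)%R; split; rewrite ?(inj_eq (addrI _)) ?shift_shift ?addNKr //.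
- by apply: subgroupD => //; exact: subgroupN.
- by apply: subgroupD => //; exact: subgroupN.
Qed.

Lemma cover_count_ge0 L A x : 0 <= cover_count L A x.
Proof. by apply: esum_ge0 => l _; rewrite lee_fin. Qed.

Lemma cover_count_ge1 L A l x : L l -> shift A l x -> 1 <= cover_count L A x.
Proof.
move=> Ll Alx; apply: le_trans (esum_ge1 _ Ll).
by rewrite indicE mem_set.
Qed.

Lemma cover_count_ge2 L A x : covered_twice A L x -> 1 + 1 <= cover_count L A x.
Proof.
move=> [l [l' [Ll Ll' ll' Alx Al'x]]].
apply: le_trans (esum_ge2 _ Ll Ll' ll').
by rewrite !indicE !mem_set.
Qed.

Lemma measurable_cover_count L A : countable L -> measurable (A : set (Rm R m)) ->
  measurable_fun setT (cover_count L A : Rm R m -> \bar R).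
Proof.
move=> cL mA; apply: emeasurable_esum => //.
by move=> l _; apply/measurable_EFinP/measurable_indic; exact: measurable_shift.
Qed.

Lemma integral_cover_count L A F : countable L ->
  measurable (A : set (Rm R m)) -> measurable (F : set (Rm R m)) ->
  \int[lebesgue]_(x in F) cover_count L A x = \esum_(l in L) lebesgue (shift A l `&` F).
Proof.
move=> cL mA mF; rewrite integral_esum //.
- by apply: eq_esum => l _; rewrite integral_indic //; exact: measurable_shift.
- by move=> l _; apply/measurable_EFinP/measurable_indic; exact: measurable_shift.
Qed.

Lemma cover_count_twice_ineq A L x : is_subgroup L ->
  (\1_(mink_sum A L) x)%:E + cover_count L (A `&` covered_twice A L) x * (2^-1)%:E
    <= cover_count L A x.
Proof.
move=> gL; have shift_twice l : L l ->
    shift (A `&` covered_twice A L) l = shift A l `&` covered_twice A L.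
  by move=> Ll; rewrite shiftI shift_covered_twice covered_twice_shift.
have [twice|once] := pselect (covered_twice A L x).
  have -> : cover_count L (A `&` covered_twice A L) x = cover_count L A x.
    apply: eq_esum => l Ll; rewrite shift_twice // indicI /=.
    by rewrite [\1_(covered_twice A L) x]indicE mem_set ?mulr1.
  apply: lee_add_half_count; last exact: cover_count_ge2.
  by rewrite indicE; case: (_ \in _).
have -> : cover_count L (A `&` covered_twice A L) x = 0.
  apply: esum1 => l Ll; rewrite shift_twice // indicI /=.
  by rewrite [\1_(covered_twice A L) x]indicE memNset ?mulr0.
rewrite mul0e adde0; have [ALx|notAL] := pselect (mink_sum A L x); last first.
  by rewrite indicE memNset // cover_count_ge0.
have [l Ll Axl] := (mink_sumP A L x).1 ALx.
by rewrite indicE mem_set //; apply: cover_count_ge1 Ll _; rewrite shiftE.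
Qed.

End cover_counts.

Section corollary.
Variables (R : realType) (m : nat) (L1 L2 C F1 F2 : set 'rV[R]_m).
Local Notation M := (mink_sum L1 L2).
Local Notation C1 := (mink_sum C L1).
Local Notation lebesgue := (@lebesgue R m).
Hypotheses (gL1 : is_subgroup L1) (gL2 : is_subgroup L2) (L12 : L1 `&` L2 = [set 0])
  (cM : countable M) (cC : compact C)
  (fdF1 : fund_domain L1 F1) (fdF2 : fund_domain M F2).
Local Open Scope ereal_scope.

Let cL1 : countable L1. Proof. exact: sub_countable (subset_card_le (sub_mink_suml gL2)) cM. Qed.
Let cL2 : countable L2. Proof. exact: sub_countable (subset_card_le (sub_mink_sumr gL1)) cM. Qed.
Let tF1 : tiling L1 F1. Proof. exact: fund_domain_tiling. Qed.
Let tF2 : tiling M F2. Proof. by apply: fund_domain_tiling => //; exact: mink_sum_subgroup. Qed.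
Let mF1 : measurable (F1 : set (Rm R m)). Proof. exact/measurable_lebP/fdF1.1. Qed.
Let mF2 : measurable (F2 : set (Rm R m)). Proof. exact/measurable_lebP/fdF2.1. Qed.
Let mC : measurable (C : set (Rm R m)).
Proof. exact/measurable_closed/(compact_closed (@norm_hausdorff _ _) cC). Qed.
Let mC1 : measurable (C1 : set (Rm R m)). Proof. exact: measurable_mink_sum. Qed.

Let D := C1 `&` covered_twice C1 L2.

Let mD : measurable (D : set (Rm R m)).
Proof.
rewrite /D; have -> : covered_twice C1 L2 =
    \bigcup_(l in L2) (shift C1 l `&` \bigcup_(l' in L2 `\ l) shift C1 l').
  apply/seteqP; split => [x [l [l' [Ll Ll' ll' C1l C1l']]]|x [l Ll [C1l [l' [Ll' l'l] C1l']]]].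
    by exists l => //; split => //; exists l' => //; split => //; apply/eqP; rewrite eq_sym.
  by exists l, l'; split => //; apply/eqP => ll'; apply: l'l; rewrite ll'.
apply: measurableI => //; apply: countable_bigcup_measurable => // l _.
apply: measurableI; first exact: measurable_shift.
apply: countable_bigcup_measurable => [|l' _]; last exact: measurable_shift.
exact: sub_countable (subset_card_le (@subDsetl _ _ _)) cL2.
Qed.

Let invariant_C1 l : L1 l -> shift C1 l = C1.
Proof. exact: shift_mink_sum_subgroup. Qed.

Let invariant_D l : L1 l -> shift D l = D.
Proof. by move=> Ll; rewrite shiftI shift_covered_twice invariant_C1. Qed.

Lemma esum_lebesgue_shift_fund_domain S : measurable (S : set (Rm R m)) ->
  (forall l, L1 l -> shift S l = S) ->
  \esum_(l in L2) lebesgue (shift S l `&` F2) = lebesgue (S `&` F1).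
Proof.
move=> mS invS; rewrite esum_lebesgue_shift_swap // -measure_countable_bigcup //.
- rewrite -setI_bigcupr -mink_sum_bigcup.
  apply: lebesgue_tiling_invariant cL1 gL1 _ tF1 _ mF1 mS invS.
    exact: tiling_mink_sum.
  exact: measurable_mink_sum.
- by move=> l _; apply: measurableI => //; exact: measurable_shift.
- by apply: trivIset_setIl; apply: tiling_trivIset tF2 _; exact: sub_mink_sumr.
Qed.

Lemma lebesgue_C1_F1_fin : lebesgue (C1 `&` F1) < +oo.
Proof.
apply: le_lt_trans (compact_lebesgue_fin cC).
exact: lebesgue_mink_sum_tiling_le.
Qed.

Lemma lebesgue_C2_D_le :
  lebesgue (mink_sum C M `&` F2) + lebesgue (D `&` F1) * (2^-1)%:E
    <= lebesgue (C1 `&` F1).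
Proof.
have int_count S : measurable (S : set (Rm R m)) -> (forall l, L1 l -> shift S l = S) ->
    \int[lebesgue]_(x in F2) cover_count L2 S x = lebesgue (S `&` F1).
  by move=> mS invS; rewrite integral_cover_count // esum_lebesgue_shift_fund_domain.
have mC2 : measurable (mink_sum C1 L2 : set (Rm R m)) by exact: measurable_mink_sum.
have mind : measurable_fun (F2 : set (Rm R m))
    (fun x : Rm R m => (\1_(mink_sum C1 L2) x)%:E : \bar R).
  exact/measurable_EFinP/measurable_indic.
have mcount S : measurable (S : set (Rm R m)) ->
    measurable_fun (F2 : set (Rm R m)) (cover_count L2 S : Rm R m -> _).
  by move=> mS; exact: measurable_funS (measurable_cover_count _ _).
have mhalf : measurable_fun (F2 : set (Rm R m))
    (fun x : Rm R m => cover_count L2 D x * (2^-1)%:E).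
  by apply: emeasurable_funM; [exact: mcount | exact: measurable_cst].
have half0 x : F2 x -> 0 <= cover_count L2 D x * (2^-1)%:E.
  by move=> _; apply: mule_ge0; [exact: cover_count_ge0 | rewrite lee_fin].
rewrite -int_count // -int_count // mink_sumA -integral_indic //.
rewrite -ge0_integralZr //; last 2 first.
- exact: mcount.
- by move=> x _; exact: cover_count_ge0.
rewrite -ge0_integralD //; apply: ge0_le_integral => //.
- by move=> x F2x; apply: adde_ge0; [rewrite lee_fin | exact: half0].
- exact: emeasurable_funD.
- exact: mcount.
- by move=> x _; exact: cover_count_twice_ineq.
Qed.

End corollary.

Local Open Scope classical_set_scope.
Local Open Scope ring_scope.

Theorem corollary2p14 (R : realType) (m : nat)
  (L1 L2 : set 'rV[R]_m) (C : set 'rV[R]_m)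
  (F1 F2 : set 'rV[R]_m) :
  is_subgroup L1 -> is_subgroup L2 ->
  L1 `&` L2 = [set 0] ->
  covol1_lattice (mink_sum L1 L2) ->
  compact C ->
  fund_domain L1 F1 ->
  fund_domain (mink_sum L1 L2) F2 ->
  let C1 := mink_sum C L1 in
  let C2 := mink_sum C (mink_sum L1 L2) in
  let D1 := quot_leb F1
        [set x | C1 x /\ exists l l' : 'rV[R]_m, [/\ L2 l, L2 l', l != l',
                    mink_sum C1 [set l] x & mink_sum C1 [set l'] x]] in
  (quot_leb F2 C2 <= quot_leb F1 C1 - D1 * (2^-1)%:E)%E.
Proof.
(* The lets sit under the [is_true] coercion, so they are unfolded rather than introduced. *)
move=> gL1 gL2 L12 /covol1_lattice_countable cM cC fdF1 fdF2; cbv zeta.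
have C1_fin : quot_leb F1 (mink_sum C L1) \is a fin_num.
  by rewrite ge0_fin_numE ?leb_ge0 //; exact: (lebesgue_C1_F1_fin gL1 gL2 cM cC fdF1).
by rewrite lee_suber_addr //; exact: (lebesgue_C2_D_le gL1 gL2 L12 cM cC fdF1 fdF2).
Qed.
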